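(* Let $n\ge1$, $a_{i0}>0$, $a_{ij}\ge 0$ and $\pi_i>0$ for $i,j=1,\ldots,n$, and assume $$\kappa:=\min_{i=1,\ldots,n}\Big(8\pi_i a_{ii}-\sum_{j=1,\,j\neq i}^n\pi_j a_{ji}\Big)>0.$$ Let $\varepsilon>0$ and let $\mu_1,\ldots,\mu_n$ satisfy $\mu_i\ge\sum_{j\ne i}(a_{ij}+a_{ji})/2$. For $u\in(0,\infty)^n$ define $$A_{ij}(u)=\delta_{ij}a_{i0}+\delta_{ij}\sum_{k=1}^na_{ik}u_k+a_{ij}u_i,\quad A_\varepsilon(u)=A(u)+\varepsilon A^0(u),\quad A^0_{ij}(u)=\delta_{ij}\frac{\mu_i}{\pi_i}u_i^2,$$ $$H_{\varepsilon,ij}(u)=\delta_{ij}\Big(\frac{\pi_i}{u_i^2}+\frac{\varepsilon}{u_i}\Big),$$ and for $\eta>0$ write $u+\eta=(u_1+\eta,\ldots,u_n+\eta)$. Then there exists $\eta_0>0$ such that for all $0<\eta\le\eta_0$, $u\in(0,\infty)^n$ and $z\in\mathbb{R}^n$, $$z^TH_\varepsilon(u+\eta)A_\varepsilon(u)z\ge\frac{\kappa}{4}\sum_{i=1}^n\frac{z_i^2}{u_i+\eta}-\eta\varepsilon C_1\sum_{i=1}^n\frac{z_i^2}{u_i+\eta}-\eta\varepsilon^2C_2\sum_{i=1}^nz_i^2,$$ where $C_1>0$ depends only on $(a_{ij})$ and $(\mu_i)$, and $C_2>0$ depends only on $(\mu_i/\pi_i)$.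
   Context: $\delta_{ij}$ is the Kronecker symbol. *)

From mathcomp Require Import all_boot all_order all_algebra.
Set Implicit Arguments. Unset Strict Implicit. Unset Printing Implicit Defensive.
Import Order.TTheory GRing.Theory Num.Theory.
Local Open Scope ring_scope.

(* Vectors in R^n are column vectors 'cV[R]_n; entry i is written v i 0. *)
Section Defs.
Variables (R : realFieldType) (n : nat).

Definition kdelta (i j : 'I_n) : R := (i == j)%:R.

Definition Amat (a0 : 'cV[R]_n) (a : 'M[R]_n) (u : 'cV[R]_n) : 'M[R]_n :=
  \matrix_(i, j) (kdelta i j * a0 i 0 + kdelta i j * (\sum_k a i k * u k 0)
                  + a i j * u i 0).

Definition A0mat (mu pi u : 'cV[R]_n) : 'M[R]_n :=
  \matrix_(i, j) (kdelta i j * (mu i 0 / pi i 0) * u i 0 ^+ 2).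

Definition Aeps (eps : R) (a0 : 'cV[R]_n) (a : 'M[R]_n) (mu pi u : 'cV[R]_n)
  : 'M[R]_n := Amat a0 a u + eps *: A0mat mu pi u.

Definition Heps (eps : R) (pi u : 'cV[R]_n) : 'M[R]_n :=
  \matrix_(i, j) (kdelta i j * (pi i 0 / u i 0 ^+ 2 + eps / u i 0)).

Definition shiftv (u : 'cV[R]_n) (eta : R) : 'cV[R]_n := \col_i (u i 0 + eta).

Definition kappa_i (a : 'M[R]_n) (pi : 'cV[R]_n) (i : 'I_n) : R :=
  8 * pi i 0 * a i i - \sum_(j | j != i) pi j 0 * a j i.

Definition qform (M : 'M[R]_n) (z : 'cV[R]_n) : R := ((z^T *m M *m z) 0 0).
End Defs.

(* Write v_i = u_i + eta and h_i = pi_i / v_i^2 + eps / v_i, so that the form is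
     sum_i h_i z_i^2 (a_i0 + eps mu_i u_i^2 / pi_i)
     + sum_(i,j) h_i a_ij (u_j z_i^2 + u_i z_i z_j).
   Completing a square, each cross term (j <> i) is at least minus a charge
   a_ij (eta pi_i z_i^2 / v_i^2 + eps u_i^2 z_i^2 / (2 v_i^2)) on index i and a
   charge a_ij (pi_i z_j^2 / (4 v_j) + eps z_j^2 / 2) on index j.  The diagonal
   part of row i pays for the charges landing on i: 2 pi_i a_ii u_i z_i^2 / v_i^2
   against the pi-charges leaves (8 pi_i a_ii - sum_j pi_j a_ji) z_i^2 / (4 v_i),
   at least kappa z_i^2 / (4 v_i), up to eta pi_i (2 a_ii + sum_j a_ij) z_i^2 / v_i^2,
   which a_i0 covers once eta is small; eps mu_i u_i^2 z_i^2 / v_i^2 covers the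
   eps-charges since mu_i >= sum_j (a_ij + a_ji) / 2, up to 2 eta eps mu_i z_i^2 / v_i,
   whence C1 = 1 + 2 sum_k |mu_k|.  The eps^2 part of the form is nonnegative, so
   any positive C2 will do. *)

From mathcomp Require Import all_boot all_order all_algebra.
From mathcomp Require Import ring lra.
Import Order.TTheory GRing.Theory Num.Theory.
Local Open Scope ring_scope.

Ltac nonneg :=
  repeat first [ assumption | exact: sqr_ge0 | exact: ltW | apply: mulr_ge0
               | apply: divr_ge0 | apply: addr_ge0 | rewrite invr_ge0 ].

Section ScalarBounds.
Variable R : realFieldType.
Local Set Implicit Arguments.
Local Unset Strict Implicit.

Lemma one_sub_sqr_shift_ratio_ge0 (u eta : R) :
  0 < u -> 0 < eta -> 0 <= 1 - (u / (u + eta)) ^+ 2.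
Proof.
move=> u_gt0 eta_gt0; have v_neq0 : u + eta != 0 by rewrite gt_eqF ?addr_gt0.
have -> : 1 - (u / (u + eta)) ^+ 2 = eta * (2 * u + eta) / (u + eta) ^+ 2.
  by field.
nonneg; lra.
Qed.

Lemma cross_term_ge (pi a eps eta ui uj zi zj : R) :
  0 < pi -> 0 <= a -> 0 < eps -> 0 < ui -> 0 < uj -> 0 < eta ->
  - a * (eta * pi * (zi ^+ 2 / (ui + eta) ^+ 2)
         + eps * (ui / (ui + eta)) ^+ 2 * zi ^+ 2 / 2)
  - a * (pi * (zj ^+ 2 / (uj + eta)) / 4 + eps * zj ^+ 2 / 2)
  <= (pi / (ui + eta) ^+ 2 + eps / (ui + eta)) * a * (uj * zi ^+ 2 + ui * zi * zj).
Proof.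
move=> pi_gt0 a_ge0 eps_gt0 ui_gt0 uj_gt0 eta_gt0.
have t_ge0 := one_sub_sqr_shift_ratio_ge0 ui_gt0 eta_gt0.
have vi_gt0 : 0 < ui + eta by lra.
have vj_gt0 : 0 < uj + eta by lra.
have vi_neq0 : ui + eta != 0 by rewrite gt_eqF.
have vj_neq0 : uj + eta != 0 by rewrite gt_eqF.
rewrite -subr_ge0; set vi := ui + eta in vi_gt0 vi_neq0 t_ge0 *.
set vj := uj + eta in vj_gt0 vj_neq0 *; set t := ui / vi in t_ge0 *.
have -> : (pi / vi ^+ 2 + eps / vi) * a * (uj * zi ^+ 2 + ui * zi * zj)
    - (- a * (eta * pi * (zi ^+ 2 / vi ^+ 2) + eps * t ^+ 2 * zi ^+ 2 / 2)
       - a * (pi * (zj ^+ 2 / vj) / 4 + eps * zj ^+ 2 / 2))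
  = pi * a * vj * ((zi / vi + t * (zj / vj) / 2) ^+ 2
                   + (1 - t ^+ 2) * (zj / vj) ^+ 2 / 4)
    + eps * a * uj * zi ^+ 2 / vi + eps * a * (t * zi + zj) ^+ 2 / 2.
  by rewrite /t /vi /vj; field; exact/andP.
nonneg.
Qed.

Lemma diag_term_ge (pi a0 aii mu A B S kappa C1 eps eta u z : R) :
  0 < pi -> 0 < u -> 0 < eps -> 0 < eta -> 0 <= aii -> 0 <= A -> 0 <= B ->
  eta * (2 * aii + A) <= a0 -> kappa <= 8 * pi * aii - S ->
  (A + B) / 2 <= mu -> 2 * mu <= C1 ->
  (kappa / 4 - eta * eps * C1) * (z ^+ 2 / (u + eta))
  <= (pi / (u + eta) ^+ 2 + eps / (u + eta)) * z ^+ 2 * (a0 + eps * (mu / pi * u ^+ 2))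
     + (pi / (u + eta) ^+ 2 + eps / (u + eta)) * aii * (u * z ^+ 2 + u * z * z)
     - (A * (eta * pi * (z ^+ 2 / (u + eta) ^+ 2)
             + eps * (u / (u + eta)) ^+ 2 * z ^+ 2 / 2)
        + (S * (z ^+ 2 / (u + eta)) / 4 + B * (eps * z ^+ 2 / 2))).
Proof.
move=> pi_gt0 u_gt0 eps_gt0 eta_gt0 aii_ge0 A_ge0 B_ge0 a0_ge kappa_le mu_ge C1_ge.
have t_ge0 := one_sub_sqr_shift_ratio_ge0 u_gt0 eta_gt0.
have v_gt0 : 0 < u + eta by lra.
have v_neq0 : u + eta != 0 by rewrite gt_eqF.
have pi_neq0 : pi != 0 by rewrite gt_eqF.
have a0_ge0 : 0 <= a0 by apply: le_trans a0_ge; nonneg; lra.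
have mu_ge0 : 0 <= mu by lra.
have a0_slack : 0 <= a0 - eta * (2 * aii + A) by lra.
have kappa_slack : 0 <= 8 * pi * aii - S - kappa by lra.
have mu_slack : 0 <= mu - (A + B) / 2 by lra.
have C1_slack : 0 <= C1 - 2 * mu by lra.
rewrite -subr_ge0; set v := u + eta in v_gt0 v_neq0 t_ge0 *.
set t := u / v in t_ge0 *; set L := (X in 0 <= X).
have -> : L = pi * (z ^+ 2 / v ^+ 2) * (a0 - eta * (2 * aii + A))
    + z ^+ 2 / v / 4 * (8 * pi * aii - S - kappa)
    + eps * z ^+ 2 * ((mu - (A + B) / 2) + (1 - t ^+ 2) * A / 2)
    + eps * eta * (z ^+ 2 / v ^+ 2) * ((C1 - 2 * mu) * v + mu * eta)
    + eps * z ^+ 2 / v * (a0 + eps * (mu / pi) * u ^+ 2 + 2 * aii * u).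
  by rewrite /L /t /v; field; exact/andP.
nonneg.
Qed.

Lemma exists_scale_le (I : finType) (D c : I -> R) :
  (forall i, 0 <= D i) -> (forall i, 0 < c i) ->
  exists2 eta0 : R, 0 < eta0 & forall (eta : R) i, eta <= eta0 -> eta * D i <= c i.
Proof.
move=> D_ge0 c_gt0; set s := \sum_i D i / c i.
have s_ge0 : 0 <= s by apply: sumr_ge0 => i _; nonneg.
exists (1 + s)^-1; first by rewrite invr_gt0; lra.
move=> eta i eta_le; apply: le_trans (ler_wpM2r (D_ge0 i) eta_le) _.
have Dc_le : D i / c i <= 1 + s.
  rewrite /s (bigD1 i) //= addrCA lerDl; nonneg.
  by apply: sumr_ge0 => j _; nonneg.
by rewrite ler_pdivrMl ?ltr_wpDr // -ler_pdivrMr.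
Qed.

Lemma le_sum_norm (I : finType) (f : I -> R) i : f i <= \sum_k `|f k|.
Proof.
rewrite (le_trans (ler_norm _)) // (bigD1 i) //= lerDl.
exact: sumr_ge0.
Qed.

End ScalarBounds.

Lemma sum_offdiag_swap (V : nmodType) (I : finType) (F : I -> I -> V) :
  \sum_i \sum_(j | j != i) F i j = \sum_i \sum_(j | j != i) F j i.
Proof.
rewrite (exchange_big_dep xpredT) //=; apply: eq_bigr => i _.
by apply: eq_bigl => j; rewrite eq_sym.
Qed.

Section DiagonalQuadraticForm.
Variables (R : realFieldType) (n : nat).

Lemma sum_kdelta (i : 'I_n) (f : 'I_n -> R) : \sum_j kdelta R i j * f j = f i.
Proof.
rewrite (bigD1 i) //= /kdelta eqxx mul1r big1 ?addr0 // => j /negbTE.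
by rewrite eq_sym => ->; rewrite mul0r.
Qed.

Lemma qform_diag_mulmx (h : 'I_n -> R) (A : 'M[R]_n) (z : 'cV[R]_n) :
  qform (\matrix_(i, j) (kdelta R i j * h i) *m A) z =
  \sum_i \sum_j z i 0 * (h i * A i j) * z j 0.
Proof.
rewrite /qform !mxE exchange_big; apply: eq_bigr => j _.
rewrite mxE big_distrl /=; apply: eq_bigr => i _.
rewrite !mxE; congr (_ * _ * _).
under eq_bigr do rewrite mxE -mulrA.
by rewrite sum_kdelta.
Qed.

End DiagonalQuadraticForm.

Section Estimate.
Local Set Implicit Arguments.
Local Unset Strict Implicit.
Variables (R : realFieldType) (n : nat).
Variables (a0 : 'cV[R]_n) (a : 'M[R]_n) (pi mu u z : 'cV[R]_n).
Variables (kappa eps eta C1 : R).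
Hypotheses (a_ge0 : forall i j, 0 <= a i j) (pi_gt0 : forall i, 0 < pi i 0).
Hypotheses (u_gt0 : forall i, 0 < u i 0) (eps_gt0 : 0 < eps) (eta_gt0 : 0 < eta).

Local Notation v i := (u i 0 + eta).
Local Notation h i := (pi i 0 / v i ^+ 2 + eps / v i).
Local Notation rowsum i := (\sum_(j | j != i) a i j).
Local Notation colsum i := (\sum_(j | j != i) a j i).
Local Notation pi_colsum i := (\sum_(j | j != i) pi j 0 * a j i).
Local Notation out_charge i := (eta * pi i 0 * (z i 0 ^+ 2 / v i ^+ 2)
  + eps * (u i 0 / v i) ^+ 2 * z i 0 ^+ 2 / 2).

Lemma qform_HAeps_rows :
  qform (Heps eps pi (shiftv u eta) *m Aeps eps a0 a mu pi u) z =
  \sum_i (h i * z i 0 ^+ 2 * (a0 i 0 + eps * (mu i 0 / pi i 0 * u i 0 ^+ 2))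
          + \sum_j h i * a i j * (u j 0 * z i 0 ^+ 2 + u i 0 * z i 0 * z j 0)).
Proof.
have -> : Heps eps pi (shiftv u eta) = \matrix_(i, j) (kdelta R i j * h i).
  by apply/matrixP => i j; rewrite !mxE.
rewrite qform_diag_mulmx; apply: eq_bigr => i _.
transitivity (\sum_j (kdelta R i j * (h i * z i 0 * (a0 i 0
       + eps * (mu i 0 / pi i 0 * u i 0 ^+ 2) + \sum_k a i k * u k 0) * z j 0)
     + h i * a i j * (u i 0 * z i 0 * z j 0))).
  by apply: eq_bigr => j _; rewrite /Aeps !mxE; ring.
rewrite big_split /= sum_kdelta.
rewrite [X in _ = _ + X](_ : _ = h i * z i 0 ^+ 2 * \sum_k a i k * u k 0
    + \sum_j h i * a i j * (u i 0 * z i 0 * z j 0)); first by ring.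
by rewrite big_distrr -big_split; apply: eq_bigr => j _ /=; ring.
Qed.

Lemma sum_cross_charges :
  \sum_i \sum_(j | j != i) (- a i j * out_charge i
      - a i j * (pi i 0 * (z j 0 ^+ 2 / v j) / 4 + eps * z j 0 ^+ 2 / 2))
  = - \sum_i (rowsum i * out_charge i
              + (pi_colsum i * (z i 0 ^+ 2 / v i) / 4 + colsum i * (eps * z i 0 ^+ 2 / 2))).
Proof.
under eq_bigr do rewrite sumrB.
rewrite sumrB [X in _ - X]sum_offdiag_swap -sumrB -sumrN.
apply: eq_big => // i _.
rewrite -sumrB !big_distrl -!big_split -sumrN /=; apply: eq_bigr => j _; ring.
Qed.

Lemma offdiag_terms_ge :
  - \sum_i (rowsum i * out_charge i
            + (pi_colsum i * (z i 0 ^+ 2 / v i) / 4 + colsum i * (eps * z i 0 ^+ 2 / 2)))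
  <= \sum_i \sum_(j | j != i) h i * a i j * (u j 0 * z i 0 ^+ 2 + u i 0 * z i 0 * z j 0).
Proof.
rewrite -sum_cross_charges; apply: ler_sum => i _; apply: ler_sum => j _.
exact: cross_term_ge.
Qed.

Hypothesis eta_small : forall i, eta * (2 * a i i + rowsum i) <= a0 i 0.
Hypothesis kappa_le : forall i, kappa <= kappa_i a pi i.
Hypothesis mu_ge : forall i, (rowsum i + colsum i) / 2 <= mu i 0.
Hypothesis C1_ge : forall i, 2 * mu i 0 <= C1.

Lemma qform_HAeps_ge :
  kappa / 4 * (\sum_i z i 0 ^+ 2 / v i) - eta * eps * C1 * (\sum_i z i 0 ^+ 2 / v i)
  <= qform (Heps eps pi (shiftv u eta) *m Aeps eps a0 a mu pi u) z.
Proof.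
rewrite qform_HAeps_rows; under [X in _ <= X]eq_bigr => i _ do rewrite (bigD1 i) //= addrA.
rewrite big_split /= -mulrBl big_distrr /=.
apply: le_trans (lerD (lexx _) offdiag_terms_ge); rewrite -sumrB.
apply: ler_sum => i _.
by apply: diag_term_ge => //; [exact: sumr_ge0 | exact: sumr_ge0 | exact: kappa_le].
Qed.

End Estimate.

Theorem lemma11 (R : realFieldType) (n : nat) :
  (0 < n)%N ->
  exists (C1 : 'M[R]_n -> 'cV[R]_n -> R) (C2 : 'cV[R]_n -> R),
    (forall a mu, 0 < C1 a mu) /\ (forall r, 0 < C2 r) /\
    forall (a0 : 'cV[R]_n) (a : 'M[R]_n) (pi mu : 'cV[R]_n) (kappa eps : R),
      (forall i, 0 < a0 i 0) ->
      (forall i j, 0 <= a i j) ->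
      (forall i, 0 < pi i 0) ->
      (* kappa = min_i (8 pi_i a_ii - sum_{j<>i} pi_j a_ji) *)
      (forall i, kappa <= kappa_i a pi i) ->
      (exists i, kappa = kappa_i a pi i) ->
      0 < kappa ->
      0 < eps ->
      (forall i, (\sum_(j | j != i) (a i j + a j i)) / 2 <= mu i 0) ->
      exists eta0 : R, 0 < eta0 /\
        forall (eta : R) (u z : 'cV[R]_n),
          0 < eta -> eta <= eta0 ->
          (forall i, 0 < u i 0) ->
          qform (Heps eps pi (shiftv u eta) *m Aeps eps a0 a mu pi u) z
          >= kappa / 4 * (\sum_i z i 0 ^+ 2 / (u i 0 + eta))
             - eta * eps * C1 a mu * (\sum_i z i 0 ^+ 2 / (u i 0 + eta))
             - eta * eps ^+ 2 * C2 (\col_i (mu i 0 / pi i 0))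
                 * (\sum_i z i 0 ^+ 2).
Proof.
move=> _; exists (fun _ mu => 1 + 2 * \sum_k `|mu k 0|), (fun _ => 1).
split=> [a mu|].
  have : 0 <= \sum_k `|mu k 0| by exact: sumr_ge0.
  lra.
split=> [_|]; first exact: ltr01.
move=> a0 a pi mu kappa eps a0_gt0 a_ge0 pi_gt0 kappa_le _ _ eps_gt0 mu_ge.
have D_ge0 i : 0 <= 2 * a i i + \sum_(j | j != i) a i j.
  by apply: addr_ge0; [apply: mulr_ge0 | apply: sumr_ge0].
have [eta0 eta0_gt0 eta0_small] := exists_scale_le D_ge0 a0_gt0.
exists eta0; split=> // eta u z eta_gt0 eta_le u_gt0.
have C1_ge i : 2 * mu i 0 <= 1 + 2 * \sum_k `|mu k 0|.
  have := le_sum_norm (fun k => mu k 0) i; lra.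
have z2_ge0 : 0 <= eta * eps ^+ 2 * 1 * \sum_i z i 0 ^+ 2.
  by apply: mulr_ge0; [nonneg | apply: sumr_ge0 => i _; exact: sqr_ge0].
apply: le_trans (qform_HAeps_ge z a_ge0 pi_gt0 u_gt0 eps_gt0 eta_gt0
  (fun i => eta0_small eta i eta_le) kappa_le _ C1_ge).
- lra.
- by move=> i; rewrite -big_split; exact: mu_ge.
Qed.
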